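(* Let $f:\mathbb R^p\to\mathbb R^p$ be a continuous function of the form $f(x)=\sum_{\ell=1}^L\mathbf 1\{x\in\mathscr X^{(\ell)}\}(\phi^{(\ell)}+\Phi^{(\ell)}x)$, where $\{\mathscr X^{(\ell)}\}_{\ell=1}^L$ is a partition of $\mathbb R^p$ into convex sets, $\phi^{(\ell)}\in\mathbb R^p$ and $\Phi^{(\ell)}\in\mathbb R^{p\times p}$. Then: (1) for every $x',x''\in\mathbb R^p$ there exists $\Phi\in\operatorname{co}\{\Phi^{(\ell)}\}_{\ell=1}^L$ such that $f(x'')-f(x')=\Phi(x''-x')$; (2) if $f$ is invertible, then the sets $\mathscr Y^{(\ell)}\defeq f(\mathscr X^{(\ell)})$ partition $\mathbb R^p$ and $f^{-1}(y)=\sum_{\ell=1}^L\mathbf 1\{y\in\mathscr Y^{(\ell)}\}(\Phi^{(\ell)})^{-1}(y-\phi^{(\ell)})$. Suppose further that there exist $a\in\mathbb R^p\setminus\{0\}$ and thresholds $-\infty=\tau_0<\tau_1<\dots<\tau_L=+\infty$ with $\mathscr X^{(\ell)}=\{x\in\mathbb R^p:a^\top x\in(\tau_{\ell-1},\tau_\ell]\}$. Then: (3) if $f$ is invertible, $f^{-1}(y)=\sum_{\ell=1}^L\mathbf 1\{b^\top y\in(\nu_{\ell-1},\nu_\ell]\}(\Phi^{(\ell)})^{-1}(y-\phi^{(\ell)})$, where $b^\top\defeq a^\top(\Phi^{(1)})^{-1}$ and $\nu_\ell\defeq\frac{\det\Phi^{(\ell)}}{\det\Phi^{(1)}}\tau_\ell+a^\top(\Phi^{(1)})^{-1}\phi^{(\ell)}$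 for $\ell\in\{0,\dots,L\}$.
   Context: $\operatorname{co}$ denotes the convex hull. In parts (2)–(3), the formulas involve $(\Phi^{(\ell)})^{-1}$; the conventions $\pm\infty$ times positive scalars plus finite constants are $\pm\infty$. *)

From HB Require Import structures.
From mathcomp Require Import all_boot all_order all_algebra.
From mathcomp Require Import all_classical all_reals all_analysis.
Set Implicit Arguments. Unset Strict Implicit. Unset Printing Implicit Defensive.
Import Order.TTheory GRing.Theory Num.Theory.
Import numFieldNormedType.Exports.
Local Open Scope classical_set_scope.
Local Open Scope ring_scope.

(* Pieces are indexed by l in {1, ..., L}, as in the paper. *)

Definition is_partition (T : Type) (L : nat) (X : nat -> set T) : Prop :=
  (forall x, exists l, (1 <= l <= L)%N /\ X l x) /\
  (forall l m, (1 <= l <= L)%N -> (1 <= m <= L)%N -> l <> m ->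
     X l `&` X m = set0).

Definition in_conv_hull (R : realType) (p L : nat) (Phi : nat -> 'M[R]_p)
    (M : 'M[R]_p) : Prop :=
  exists w : nat -> R,
    (forall l, (1 <= l <= L)%N -> 0 <= w l) /\
    \sum_(1 <= l < L.+1) w l = 1 /\
    M = \sum_(1 <= l < L.+1) w l *: Phi l.

Definition dotv (R : realType) (p : nat) (a x : 'cV[R]_p) : R :=
  (a^T *m x) ord0 ord0.

Definition nu_thr (R : realType) (p L : nat) (a : 'cV[R]_p)
    (phi : nat -> 'cV[R]_p) (Phi : nat -> 'M[R]_p) (tau : nat -> \bar R)
    (l : nat) : \bar R :=
  if l == 0%N then -oo%E
  else if l == L then +oo%E
  else ((\det (Phi l) / \det (Phi 1%N)) * fine (tau l)
        + dotv a (invmx (Phi 1%N) *m phi l))%:E.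

From HB Require Import structures.
From mathcomp Require Import all_boot all_order all_algebra.
From mathcomp Require Import all_classical all_reals all_analysis.
From mathcomp Require Import zify ring lra.
Import Order.TTheory GRing.Theory Num.Theory.
Import numFieldNormedType.Exports.
Local Open Scope classical_set_scope.
Local Open Scope ring_scope.
Set Implicit Arguments. Unset Strict Implicit. Unset Printing Implicit Defensive.

(** Along a segment from x' to x'' the pieces can be peeled off one at a time:
    the parameters at which the segment lies in a given piece have their
    infimum and supremum in the closure, where by continuity f still follows
    that piece's affine formula.  Hence f x'' - f x' is a convex combination of
    the Phi l applied to x'' - x'.  For slab-shaped pieces
    tau_(l-1) < a^T x <= tau_l, continuity across each threshold hyperplane
    forces Phi_(l+1) - Phi_l to be a rank-one matrix d_l a^T, so by the matrix
    determinant lemma a^T (Phi 1)^-1 Phi_l = (det Phi_l / det Phi_1) a^T.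
    Injectivity of f makes every Phi_l invertible and every determinant ratio
    positive, so b^T f x is an increasing function of a^T x and the thresholds
    nu_l sort the images of the pieces. *)

Lemma continuous_eq0_closure (T : topologicalType) (R : realType)
    (V : normedModType R) (h : T -> V) (E : set T) :
  continuous h -> (forall u, E u -> h u = 0) -> forall x, closure E x -> h x = 0.
Proof.
move=> h_cont h_eq0 x Ex.
have nh_cont : continuous (fun u => `|h u|).
  by move=> u; apply: continuous_comp; [exact: h_cont | exact: norm_continuous].
have : closed ((fun u => `|h u|) @^-1` [set 0]).
  exact: (continuous_closedP _).1 nh_cont _ (@closed_eq R 0).
move=> /closure_id zero_closed.
suff : closure E `<=` closure ((fun u => `|h u|) @^-1` [set 0]).
  by rewrite -zero_closed => /(_ x Ex) /normr0_eq0.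
by apply: closureS => u /h_eq0 /= ->; rewrite normr0.
Qed.

Lemma closure_inf (R : realType) (A : set R) :
  A !=set0 -> has_lbound A -> closure A (inf A).
Proof.
move=> A0 Alb B; rewrite /inf nbhsN => NB.
have := closure_sup ((nonemptyN A).2 A0) ((has_lb_ubN A).1 Alb) NB.
case=> y [[a Aa <-]]; rewrite /preimage /= opprK => Ba; by exists a.
Qed.

Lemma line_continuous (R : realType) (V : normedModType R) (x v : V) :
  continuous (fun u : R => x + u *: v).
Proof. by move=> u; apply: cvgD; [exact: cvg_cst | exact: cvgZr_tmp]. Qed.

Lemma sumr_scale_pick (R : pzRingType) (V : lmodType R) (L l : nat)
    (c : nat -> R) (F : nat -> V) :
  (1 <= l <= L)%N -> c l = 1 ->
  (forall m, (1 <= m <= L)%N -> m != l -> c m = 0) ->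
  \sum_(1 <= m < L.+1) c m *: F m = F l.
Proof.
move=> lL cl c0; rewrite (bigD1_seq l) ?iota_uniq ?mem_index_iota //= cl scale1r.
rewrite big1_seq ?addr0 // => m /andP[ml].
by rewrite mem_index_iota ltnS => /c0 ->; rewrite ?scale0r.
Qed.

Lemma sum_indic_pick (T : Type) (R : pzRingType) (V : lmodType R) (L l : nat)
    (Y : nat -> set T) (F : nat -> V) y :
  (forall l m, (1 <= l <= L)%N -> (1 <= m <= L)%N -> l <> m -> Y l `&` Y m = set0) ->
  (1 <= l <= L)%N -> Y l y -> \sum_(1 <= m < L.+1) \1_(Y m) y *: F m = F l.
Proof.
move=> Ydisj lL Yly; apply: sumr_scale_pick => //; first by rewrite indicE mem_set.
move=> m mL /eqP ml; rewrite indicE memNset // => Ymy.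
have : (Y m `&` Y l) y by [].
by rewrite Ydisj.
Qed.

Lemma is_partition_image (T U : Type) (L : nat) (X : nat -> set T)
    (f : T -> U) (g : U -> T) :
  cancel f g -> cancel g f -> is_partition L X -> is_partition L (fun l => f @` X l).
Proof.
move=> fK gK [Xcov Xdisj]; split.
  by move=> y; have [l [lL Xl]] := Xcov (g y); exists l; split => //; exists (g y).
move=> l m lL mL lm; rewrite -subset0 => _ [[x Xlx <-] [x' Xmx' /(can_inj fK) x'x]].
have : (X l `&` X m) x by split => //; rewrite -x'x.
by rewrite Xdisj.
Qed.

Section piecewise_affine.
Variables (R : realType) (p L : nat) (X : nat -> set 'cV[R]_p)
  (phi : nat -> 'cV[R]_p) (Phi : nat -> 'M[R]_p) (f : 'cV[R]_p -> 'cV[R]_p).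
Hypothesis f_cont : continuous f.
Hypothesis f_piece : forall l x, (1 <= l <= L)%N -> X l x -> f x = phi l + Phi l *m x.

Lemma piece_closure l x0 v (E : set R) : (1 <= l <= L)%N ->
  (forall u, E u -> X l (x0 + u *: v)) ->
  forall u, closure E u -> f (x0 + u *: v) = phi l + Phi l *m (x0 + u *: v).
Proof.
move=> lL EX u Eu; apply/eqP; rewrite -subr_eq0; apply/eqP.
have aff_cont : continuous (fun u : R => phi l + Phi l *m (x0 + u *: v)).
  have -> : (fun u : R => phi l + Phi l *m (x0 + u *: v))
      = (fun u => (phi l + Phi l *m x0) + u *: (Phi l *m v)).
    by apply/funext => w; rewrite mulmxDr -scalemxAr addrA.
  exact: line_continuous.
pose h := (f \o (fun u : R => x0 + u *: v)) - (fun u => phi l + Phi l *m (x0 + u *: v)).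
have h_cont : continuous h.
  move=> w; apply: continuousB; last exact: aff_cont.
  by apply: continuous_comp; [exact: line_continuous | exact: f_cont].
apply: (continuous_eq0_closure h_cont _ Eu) => w /EX /(f_piece lL) fw.
by rewrite /h !fctE /= fw subrr.
Qed.

Definition increment_weights x0 v s t (w : nat -> R) :=
  [/\ forall l, 0 <= w l, \sum_(1 <= l < L.+1) w l = t - s &
      f (x0 + t *: v) - f (x0 + s *: v) = (\sum_(1 <= l < L.+1) w l *: Phi l) *m v].

Lemma increment_weights_refl x0 v s : increment_weights x0 v s s (fun=> 0).
Proof.
split => //; first by rewrite big1 ?subrr.
by rewrite subrr big1 ?mul0mx // => m _; rewrite scale0r.
Qed.

Lemma increment_weights_cat x0 v s r t w1 w2 :
  increment_weights x0 v s r w1 -> increment_weights x0 v r t w2 ->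
  increment_weights x0 v s t (fun m => w1 m + w2 m).
Proof.
move=> [w1_ge0 w1_sum w1_f] [w2_ge0 w2_sum w2_f]; split.
- by move=> m; rewrite addr_ge0.
- by rewrite big_split /= w1_sum w2_sum; lra.
- under eq_bigr do rewrite scalerDl.
  by rewrite big_split mulmxDl -w1_f -w2_f [RHS]addrC addrA subrK.
Qed.

Lemma increment_weights_piece l x0 v r r' : (1 <= l <= L)%N -> r <= r' ->
  f (x0 + r *: v) = phi l + Phi l *m (x0 + r *: v) ->
  f (x0 + r' *: v) = phi l + Phi l *m (x0 + r' *: v) ->
  increment_weights x0 v r r' (fun m => (m == l)%:R * (r' - r)).
Proof.
move=> lL rr' fr fr'; have delta_l m : (1 <= m <= L)%N -> m != l -> (m == l)%:R = 0 :> R.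
  by move=> _ /negPf ->.
split.
- by move=> m; rewrite mulr_ge0 ?subr_ge0.
- by rewrite (@sumr_scale_pick _ R^o _ l (fun m => (m == l)%:R) (fun=> r' - r)) ?eqxx.
- under eq_bigr do rewrite -scalerA.
  rewrite (@sumr_scale_pick _ _ L l (fun m => (m == l)%:R)) ?eqxx // fr fr'.
  rewrite opprD addrACA subrr add0r -mulmxBr opprD addrACA subrr add0r.
  by rewrite -scalerBl -scalemxAr scalemxAl.
Qed.

Lemma segment_increment x0 v (K : seq nat) s t : s <= t ->
  (forall u, s < u < t -> exists l, [/\ l \in K, (1 <= l <= L)%N & X l (x0 + u *: v)]) ->
  exists w, increment_weights x0 v s t w.
Proof.
have [n] := ubnP (size K); elim: n K s t => // n IH K s t /ltnSE sK st cov.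
have [<-|st'] := eqVneq s t; first by exists (fun=> 0); exact: increment_weights_refl.
have slt : s < t by rewrite lt_neqAle st' st.
have mid : s < (s + t) / 2 < t by have [-> ->] := midf_lt slt.
have [l [lK lL Xmid]] := cov _ mid.
(* The piece l met at the midpoint accounts for [inf E, sup E]; the two
   remaining subsegments avoid it, so induction on the pieces applies. *)
pose E := [set u | s <= u <= t /\ X l (x0 + u *: v)].
have Emid : E ((s + t) / 2) by split => //; case/andP: mid => /ltW -> /ltW ->.
have E0 : E !=set0 by exists ((s + t) / 2).
have Eub : has_ubound E by exists t => u [/andP[]].
have Elb : has_lbound E by exists s => u [/andP[]].
have s_inf : s <= inf E by apply: lb_le_inf E0 _ => u [/andP[]].
have sup_t : sup E <= t by apply: ge_sup E0 _ => u [/andP[]].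
have inf_sup : inf E <= sup E by apply: le_trans (ge_inf Elb Emid) (ub_le_sup Eub Emid).
have sK' : (size (rem l K) < n)%N.
  rewrite size_rem //; apply: leq_trans sK; rewrite ltn_predL lt0n size_eq0.
  by apply: contraTneq lK => ->.
have cov' u : s < u < t -> ~ E u ->
    exists m, [/\ m \in rem l K, (1 <= m <= L)%N & X m (x0 + u *: v)].
  move=> /[dup] /andP[su ut] /cov [m [mK mL Xm]] NEu; exists m; split => //.
  apply: rem_mem mK; apply/eqP => ml; apply: NEu.
  by split; [rewrite (ltW su) (ltW ut) | rewrite -ml].
have [|w1 w1P] := IH (rem l K) s (inf E) sK' s_inf.
  move=> u /andP[su uinf]; apply: cov'.
    by rewrite su (lt_le_trans uinf) // (le_trans inf_sup sup_t).
  by move=> /(ge_inf Elb); rewrite leNgt uinf.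
have [|w2 w2P] := IH (rem l K) (sup E) t sK' sup_t.
  move=> u /andP[supu ut]; apply: cov'.
    by rewrite ut andbT (le_lt_trans _ supu) // (le_trans s_inf inf_sup).
  by move=> /(ub_le_sup Eub); rewrite leNgt supu.
have EX u : E u -> X l (x0 + u *: v) by case.
have w_mid := increment_weights_piece lL inf_sup
  (piece_closure lL EX (closure_inf E0 Elb)) (piece_closure lL EX (closure_sup E0 Eub)).
by eexists; apply: increment_weights_cat w1P (increment_weights_cat w_mid w2P).
Qed.

Lemma increment_in_conv_hull : (forall x, exists l, (1 <= l <= L)%N /\ X l x) ->
  forall x' x'', exists M, in_conv_hull L Phi M /\ f x'' - f x' = M *m (x'' - x').
Proof.
move=> cover x' x''.
have [|w [w_ge0 w_sum w_f]] := @segment_increment x' (x'' - x') (iota 1 L) 0 1 ler01.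
  move=> u _; have [l [lL Xl]] := cover (x' + u *: (x'' - x')).
  by exists l; split => //; rewrite mem_iota; lia.
exists (\sum_(1 <= l < L.+1) w l *: Phi l); split.
  by exists w; split => //; rewrite w_sum subr0.
by move: w_f; rewrite scale1r scale0r addr0 [x' + _]addrC subrK.
Qed.

Lemma piece_inverse l x : (1 <= l <= L)%N -> Phi l \in unitmx -> X l x ->
  x = invmx (Phi l) *m (f x - phi l).
Proof. by move=> lL Phi_unit Xlx; rewrite (f_piece lL Xlx) addrC addKr mulKmx. Qed.

Lemma inverse_piecewise (g : 'cV[R]_p -> 'cV[R]_p) :
  is_partition L X -> cancel f g -> cancel g f ->
  (forall l, (1 <= l <= L)%N -> Phi l \in unitmx) ->
  forall y, g y = \sum_(1 <= l < L.+1) \1_(f @` X l) y *: (invmx (Phi l) *m (y - phi l)).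
Proof.
move=> X_part fK gK Phi_unit y; have [cover _] := X_part.
have [_ Y_disj] := is_partition_image fK gK X_part.
have [l [lL Xl]] := cover (g y).
rewrite (sum_indic_pick _ Y_disj lL); last by exists (g y).
by rewrite {1}(piece_inverse lL (Phi_unit l lL) Xl) gK.
Qed.
End piecewise_affine.

Section dotv_theory.
Variables (R : realType) (p : nat).
Implicit Types (a w x y : 'cV[R]_p) (A B : 'M[R]_p).

Lemma dotvD a x y : dotv a (x + y) = dotv a x + dotv a y.
Proof. by rewrite /dotv mulmxDr mxE. Qed.

Lemma dotvB a x y : dotv a (x - y) = dotv a x - dotv a y.
Proof. by rewrite /dotv mulmxBr !mxE. Qed.

Lemma dotvZ a c x : dotv a (c *: x) = c * dotv a x.
Proof. by rewrite /dotv -scalemxAr mxE. Qed.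

Lemma dotvv_gt0 a : a != 0 -> 0 < dotv a a.
Proof.
move=> a_neq0.
have sq_ge0 (i : 'I_p) : true -> 0 <= a^T 0 i * a i 0 by rewrite mxE -expr2 sqr_ge0.
rewrite /dotv mxE lt_def (sumr_ge0 _ sq_ge0) andbT.
apply: contra a_neq0 => /eqP /(psumr_eq0P sq_ge0) a2_eq0; apply/eqP/matrixP => i j.
by have /eqP := a2_eq0 i isT; rewrite !mxE (ord1 j) mulf_eq0 orbb => /eqP.
Qed.

Definition dualv a : 'cV[R]_p := (dotv a a)^-1 *: a.

Lemma dotv_dualvZ a c : a != 0 -> dotv a (c *: dualv a) = c.
Proof. by move=> a_neq0; rewrite !dotvZ mulVf ?mulr1 // gt_eqF // dotvv_gt0. Qed.

Lemma dotv_dualv a : a != 0 -> dotv a (dualv a) = 1.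
Proof. by move=> a_neq0; rewrite -[dualv a]scale1r dotv_dualvZ. Qed.

Lemma trmx_mul_dotv a y : a^T *m y = (dotv a y)%:M.
Proof. by apply/matrixP => i j; rewrite (ord1 i) (ord1 j) [RHS]mxE eqxx mulr1n. Qed.

Lemma mulmx_rank1 w a y : w *m a^T *m y = dotv a y *: w.
Proof. by rewrite -mulmxA trmx_mul_dotv mul_mx_scalar. Qed.

Lemma det_rank1_update w a : \det (1%:M + w *m a^T) = 1 + dotv a w.
Proof.
(* Factor M through the Schur complement of either diagonal block. *)
pose M := block_mx (1%:M : 'M[R]_p) (- w) a^T (1%:M : 'M[R]_1).
have M_lu : M = block_mx (1%:M + w *m a^T) (- w) 0 1%:M *m block_mx 1%:M 0 a^T 1%:M.
  by rewrite mulmx_block !mulmx0 !mul0mx !mulmx1 !mul1mx !add0r mulNmx addrK.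
have M_ul : M = block_mx 1%:M 0 a^T 1%:M *m block_mx 1%:M (- w) 0 (1%:M + a^T *m w).
  by rewrite mulmx_block !mulmx0 !mul0mx !mulmx1 !mul1mx !addr0 mulmxN addrCA addNr addr0.
have := congr1 determinant (etrans (esym M_lu) M_ul).
rewrite !det_mulmx det_ublock det_lblock !det1 !mulr1 !mul1r det_ublock det1 mul1r => ->.
by rewrite det_mx11 trmx_mul_dotv !mxE.
Qed.

Lemma mulmx_colP A B : (forall y, A *m y = B *m y) -> A = B.
Proof.
move=> AB; apply/matrixP => i j.
by have := congr1 (fun y : 'cV_p => y i 0) (AB (delta_mx j 0)); rewrite -!colE !mxE.
Qed.
End dotv_theory.

Section ereal_gaps.
Variable R : realType.
Local Open Scope ereal_scope.

Lemma lte_fin_gapr (t : R) (hi : \bar R) :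
  t%:E < hi -> exists2 d : R, (0 < d)%R & (t + d)%:E <= hi.
Proof.
case: hi => [h| |] //= => [|_]; last by exists 1%R; rewrite ?leey.
by rewrite lte_fin => th; exists (h - t)%R; rewrite ?subr_gt0 // addrC subrK.
Qed.

Lemma lte_fin_gapl (t : R) (lo : \bar R) :
  lo < t%:E -> exists2 d : R, (0 < d)%R & lo < (t - d)%:E.
Proof.
case: lo => [h| |] //= => [|_]; last by exists 1%R; rewrite ?ltNyr.
rewrite lte_fin => ht; exists ((t - h) / 2)%R; first by rewrite divr_gt0 // subr_gt0.
by rewrite lte_fin; lra.
Qed.

Lemma lte_real_segment (lo hi : \bar R) : lo < hi ->
  exists r1 r2 : R, [/\ (r1 < r2)%R, lo < r1%:E & r2%:E <= hi].
Proof.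
case: hi => [h| |]; last by rewrite ltNge leNye.
- move=> /lte_fin_gapl [d d_gt0 lo_lt]; exists (h - d)%R, h; split => //; lra.
- case: lo => [l| |] // _; last by exists 0%R, 1%R; rewrite ltNyr leey ltr01.
  by exists (l + 1)%R, (l + 2)%R; rewrite !lte_fin leey; split => //; lra.
Qed.

Lemma lte_fin_step (t k : R) (lo hi : \bar R) : lo < t%:E -> t%:E < hi -> (k <= 0)%R ->
  exists2 e : R, (0 < e)%R & (t + e)%:E <= hi /\ lo < (t + e * k)%:E.
Proof.
move=> /lte_fin_gapl [d2 d2_gt0 lo_lt] /lte_fin_gapr [d1 d1_gt0 hi_ge] k_le0.
have e_gt0 : (0 < Num.min d1 (d2 / (1 - k)))%R by rewrite lt_min d1_gt0 divr_gt0 //; lra.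
exists (Num.min d1 (d2 / (1 - k)))%R => //; split.
  by apply: le_trans hi_ge; rewrite lee_fin lerD2l ge_min lexx.
apply: (lt_le_trans lo_lt); rewrite lee_fin.
have : (Num.min d1 (d2 / (1 - k)) * (1 - k) <= d2)%R.
  by rewrite -ler_pdivlMr ?ge_min ?lexx ?orbT //; lra.
move: e_gt0; set e := Num.min _ _ => e_gt0 e_le; nra.
Qed.
End ereal_gaps.

Section threshold_pieces.
Variables (R : realType) (p L : nat) (X : nat -> set 'cV[R]_p)
  (phi : nat -> 'cV[R]_p) (Phi : nat -> 'M[R]_p) (f : 'cV[R]_p -> 'cV[R]_p)
  (a : 'cV[R]_p) (tau : nat -> \bar R).
Hypothesis f_cont : continuous f.
Hypothesis f_piece : forall l x, (1 <= l <= L)%N -> X l x -> f x = phi l + Phi l *m x.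
Hypothesis f_inj : injective f.
Hypothesis a_neq0 : a != 0.
Hypothesis L_gt0 : (0 < L)%N.
Hypothesis tau_fin : forall l, (0 < l < L)%N -> tau l \is a fin_num.
Hypothesis tau_incr : forall l, (l < L)%N -> (tau l < tau l.+1)%E.
Hypothesis X_slab : forall l, (1 <= l <= L)%N ->
  X l = [set x | (tau l.-1 < (dotv a x)%:E)%E /\ ((dotv a x)%:E <= tau l)%E].

Lemma X_slabP l x : (1 <= l <= L)%N ->
  X l x <-> (tau l.-1 < (dotv a x)%:E)%E /\ ((dotv a x)%:E <= tau l)%E.
Proof. by move=> lL; rewrite X_slab. Qed.

Lemma tau_pred_lt l : (1 <= l <= L)%N -> (tau l.-1 < tau l)%E.
Proof. by move=> lL; have := @tau_incr l.-1; rewrite prednK; [apply; lia | lia]. Qed.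

Lemma Phi_unit l : (1 <= l <= L)%N -> Phi l \in unitmx.
Proof.
move=> lL; have [r1 [r2 [r12 lo_r1 r2_hi]]] := lte_real_segment (tau_pred_lt lL).
have X_between x : r1 <= dotv a x <= r2 -> X l x.
  move=> /andP[r1_le le_r2]; apply/X_slabP => //; split.
    by apply: lt_le_trans lo_r1 _; rewrite lee_fin.
  by apply: le_trans r2_hi; rewrite lee_fin.
(* A kernel vector of Phi l, rescaled to keep a^T x within [r1, r2], would
   move a point of X l without changing its image. *)
rewrite unitmxE unitfE -det_tr; apply/negP => /det0P [v v_neq0 vPhi].
pose w := v^T; have Phi_w : Phi l *m w = 0.
  by rewrite /w -[Phi l]trmxK -trmx_mul vPhi trmx0.
pose k := dotv a w; pose c := if k == 0 then 1 else (r2 - r1) / k.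
have c_neq0 : c != 0.
  rewrite /c; case: ifP => [_|/negbT k_neq0]; first exact: oner_neq0.
  by rewrite mulf_neq0 ?invr_eq0 // subr_eq0 gt_eqF.
have ck : 0 <= c * k <= r2 - r1.
  rewrite /c; case: ifP => [/eqP ->|/negbT k_neq0].
    by rewrite mulr0 lexx subr_ge0 ltW.
  by rewrite divfK // lexx andbT subr_ge0 ltW.
pose x1 := r1 *: dualv a.
have X1 : X l x1 by apply: X_between; rewrite dotv_dualvZ // lexx ltW.
have X2 : X l (x1 + c *: w).
  apply: X_between; rewrite dotvD dotv_dualvZ // dotvZ -/k.
  by move: ck => /andP[ck_ge0 ck_le]; apply/andP; split; lra.
have : f x1 = f (x1 + c *: w).
  rewrite (f_piece lL X1) (f_piece lL X2) mulmxDr.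
  by rewrite -[Phi l *m (c *: w)]scalemxAr Phi_w scaler0 addr0.
move=> /f_inj /(congr1 (fun z => z - x1)); rewrite subrr addrC addKr => /esym /eqP.
by rewrite scaler_eq0 (negPf c_neq0) trmx_eq0 (negPf v_neq0).
Qed.

Lemma det_Phi_neq0 l : (1 <= l <= L)%N -> \det (Phi l) != 0.
Proof. by move=> /Phi_unit; rewrite unitmxE unitfE. Qed.

Lemma pieces_agree_at_threshold l x : (1 <= l < L)%N -> dotv a x = fine (tau l) ->
  phi l + Phi l *m x = phi l.+1 + Phi l.+1 *m x.
Proof.
move=> lL ax; have tau_l_fin := tau_fin lL.
have Xl : X l x.
  by apply/X_slabP; [lia | rewrite ax fineK //; split => //; apply: tau_pred_lt; lia].
rewrite -(f_piece _ Xl); last lia.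
have [d d_gt0 d_le] : exists2 d : R, 0 < d & ((fine (tau l) + d)%:E <= tau l.+1)%E.
  by apply: lte_fin_gapr; rewrite fineK //; apply: tau_incr; lia.
pose E := [set` `]0, d]] : set R.
have EX u : E u -> X l.+1 (x + u *: dualv a).
  rewrite /E /= in_itv /= => /andP[u_gt0 u_le]; apply/X_slabP; first lia.
  rewrite /= dotvD dotv_dualvZ // ax; split.
    by rewrite -[X in (X < _)%E](fineK tau_l_fin) lte_fin ltrDl.
  by apply: le_trans d_le; rewrite lee_fin lerD2l.
have E0 : E !=set0 by exists d; rewrite /E /= in_itv /= d_gt0 lexx.
have Elb : has_lbound E by exists 0 => u; rewrite /E /= in_itv /= => /andP[/ltW].
have l1L : (1 <= l.+1 <= L)%N by lia.
have := piece_closure f_cont f_piece l1L EX (closure_inf E0 Elb).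
by rewrite inf_itv ?bnd_simp // scale0r addr0.
Qed.

Definition jump l := (Phi l.+1 - Phi l) *m dualv a.

Lemma Phi_succ l : (1 <= l < L)%N -> Phi l.+1 = Phi l + jump l *m a^T.
Proof.
move=> lL; apply: mulmx_colP => y.
pose D := Phi l.+1 - Phi l; pose t := fine (tau l).
have D_level x : dotv a x = t -> D *m x = phi l - phi l.+1.
  move=> /(pieces_agree_at_threshold lL) e; rewrite mulmxBl; apply/eqP.
  by rewrite subr_eq addrAC e addrAC subrr add0r.
have D_ker z : dotv a z = 0 -> D *m z = 0.
  move=> az; apply: (@addrI _ (D *m (t *: dualv a))); rewrite addr0 -mulmxDr.
  by rewrite !D_level ?dotvD ?az ?addr0 ?dotv_dualvZ.
have := D_ker (y - dotv a y *: dualv a); rewrite dotvB dotv_dualvZ // subrr.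
rewrite mulmxBr => /(_ erefl) /eqP; rewrite subr_eq0 => /eqP Dy.
by rewrite mulmxDl mulmx_rank1 /jump scalemxAr -Dy mulmxBl addrC subrK.
Qed.

Definition det_ratio l := \det (Phi l) / \det (Phi 1%N).

Definition bdot y := dotv a (invmx (Phi 1%N) *m y).

Definition jump_factor l := 1 + dotv a (invmx (Phi l) *m jump l).

Lemma det_ratio1 : det_ratio 1%N = 1.
Proof. by rewrite /det_ratio divff // det_Phi_neq0. Qed.

Lemma bdotD y z : bdot (y + z) = bdot y + bdot z.
Proof. by rewrite /bdot mulmxDr dotvD. Qed.

Lemma bdotZ c y : bdot (c *: y) = c * bdot y.
Proof. by rewrite /bdot -scalemxAr dotvZ. Qed.

Lemma det_ratio_succ l : (1 <= l < L)%N -> det_ratio l.+1 = det_ratio l * jump_factor l.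
Proof.
move=> lL; have Phi_l_unit : Phi l \in unitmx by apply: Phi_unit; lia.
rewrite /det_ratio; have -> : Phi l.+1 = Phi l *m (1%:M + (invmx (Phi l) *m jump l) *m a^T).
  by rewrite Phi_succ // mulmxDr mulmx1 !mulmxA mulmxV // mul1mx.
by rewrite det_mulmx det_rank1_update /jump_factor mulrAC.
Qed.

Lemma bdot_Phi l z : (1 <= l <= L)%N -> bdot (Phi l *m z) = det_ratio l * dotv a z.
Proof.
elim: l z => // l IH z lL; have [-> | l_neq0] := eqVneq l 0%N.
  by rewrite /bdot mulKmx ?det_ratio1 ?mul1r ?Phi_unit.
have lL' : (1 <= l < L)%N by lia.
have bdot_jump : bdot (jump l) = det_ratio l * dotv a (invmx (Phi l) *m jump l).
  by rewrite -IH ?mulKVmx ?Phi_unit //; lia.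
rewrite Phi_succ // mulmxDl mulmx_rank1 bdotD bdotZ IH; last lia.
by rewrite bdot_jump det_ratio_succ // /jump_factor; ring.
Qed.

Lemma jump_factor_gt0 l : (1 <= l < L)%N -> 0 < jump_factor l.
Proof.
(* Otherwise the points x0 + z1 just below and x0 + z2 just above the
   threshold would have the same image. *)
move=> lL; rewrite ltNge; apply/negP => k_le0; have tau_l_fin := tau_fin lL.
set t := fine (tau l).
have [e e_gt0 [e_hi e_lo]] : exists2 e : R, 0 < e &
    ((t + e)%:E <= tau l.+1)%E /\ (tau l.-1 < (t + e * jump_factor l)%:E)%E.
  apply: lte_fin_step => //; rewrite /t fineK //; last by apply: tau_incr; lia.
  by apply: tau_pred_lt; lia.
pose x0 := t *: dualv a; pose z1 := e *: (dualv a + invmx (Phi l) *m jump l).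
pose z2 := e *: dualv a.
have X1 : X l (x0 + z1).
  apply/X_slabP; first lia.
  rewrite dotvD dotv_dualvZ // /z1 dotvZ dotvD dotv_dualv // -/(jump_factor l); split => //.
  by rewrite -(fineK tau_l_fin) lee_fin gerDl mulr_ge0_le0 // ltW.
have X2 : X l.+1 (x0 + z2).
  apply/X_slabP; first lia.
  by rewrite /= dotvD !dotv_dualvZ // -[X in (X < _)%E](fineK tau_l_fin) lte_fin ltrDl.
have f12 : f (x0 + z1) = f (x0 + z2).
  rewrite (f_piece _ X1) ?(f_piece _ X2); try lia.
  rewrite !mulmxDr !addrA (pieces_agree_at_threshold lL (dotv_dualvZ t a_neq0)).
  congr (_ + _); rewrite Phi_succ // mulmxDl mulmx_rank1 dotv_dualvZ //.
  by rewrite -2!scalemxAr mulmxDr mulKVmx ?scalerDr //; apply: Phi_unit; lia.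
have := congr1 (dotv a) (addrI _ (f_inj f12)).
rewrite dotv_dualvZ // dotvZ dotvD dotv_dualv // -/(jump_factor l) -[RHS]mulr1.
by move=> /(mulfI (lt0r_neq0 e_gt0)) k1; move: k_le0; rewrite k1 ler10.
Qed.

Lemma det_ratio_gt0 l : (1 <= l <= L)%N -> 0 < det_ratio l.
Proof.
elim: l => // l IH lL; have [-> | l_neq0] := eqVneq l 0%N.
  by rewrite det_ratio1 ltr01.
have lL' : (1 <= l < L)%N by lia.
by rewrite det_ratio_succ // mulr_gt0 ?IH ?jump_factor_gt0 //; lia.
Qed.

Local Notation nu := (nu_thr L a phi Phi tau).

Definition psi l s := det_ratio l * s + bdot (phi l).

Definition slab l := [set y | (nu l.-1 < (bdot y)%:E)%E /\ ((bdot y)%:E <= nu l)%E].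

Lemma ler_psi l : (1 <= l <= L)%N -> {mono psi l : s s' / s <= s'}.
Proof. by move=> lL s s'; rewrite lerD2r ler_pM2l // det_ratio_gt0. Qed.

Lemma ltr_psi l : (1 <= l <= L)%N -> {mono psi l : s s' / s < s'}.
Proof. by move=> /ler_psi /leW_mono. Qed.

Lemma bdot_f l x : (1 <= l <= L)%N -> X l x -> bdot (f x) = psi l (dotv a x).
Proof. by move=> lL Xlx; rewrite (f_piece lL Xlx) bdotD bdot_Phi // addrC. Qed.

Lemma psi_threshold l : (1 <= l < L)%N -> psi l (fine (tau l)) = psi l.+1 (fine (tau l)).
Proof.
move=> lL; have := congr1 bdot (pieces_agree_at_threshold lL (dotv_dualvZ _ a_neq0)).
rewrite !bdotD !bdot_Phi ?dotv_dualvZ //; try lia.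
by rewrite /psi addrC => ->; rewrite addrC.
Qed.

Lemma nu_thr0 : nu 0 = -oo%E.
Proof. by []. Qed.

Lemma nu_thrL : nu L = +oo%E.
Proof. by rewrite /nu_thr (negPf (lt0n_neq0 L_gt0)) eqxx. Qed.

Lemma nu_thrE l : (0 < l < L)%N -> nu l = (psi l (fine (tau l)))%:E.
Proof. by move=> /andP[l_gt0 lL]; rewrite /nu_thr (negPf (lt0n_neq0 l_gt0)) (ltn_eqF lL). Qed.

Lemma nu_thr_succ i : (i < L)%N -> (nu i <= nu i.+1)%E.
Proof.
move=> iL; have [-> | i_gt0] := posnP i; first by rewrite nu_thr0 leNye.
have [-> | i1L] := eqVneq i.+1 L; first by rewrite nu_thrL leey.
have iL' : (0 < i < L)%N by lia.
have i1L' : (0 < i.+1 < L)%N by lia.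
rewrite !nu_thrE // psi_threshold // lee_fin ler_psi; last lia.
have := tau_incr iL; rewrite -(fineK (tau_fin iL')) -(fineK (tau_fin i1L')) lte_fin.
exact: ltW.
Qed.

Lemma nu_thr_le i j : (i <= j <= L)%N -> (nu i <= nu j)%E.
Proof.
elim: j => [|j IH] /andP[ij jL]; first by rewrite leqn0 in ij; rewrite (eqP ij).
have [-> | ij'] := eqVneq i j.+1; first exact: lexx.
by apply: le_trans (IH _) (nu_thr_succ _); lia.
Qed.

Lemma f_slab l x : (1 <= l <= L)%N -> X l x -> slab l (f x).
Proof.
move=> lL Xlx; have [lo hi] := (X_slabP _ lL).1 Xlx.
rewrite /slab /= (bdot_f lL Xlx); split.
  have [l_le1 | l_gt1] := leqP l 1%N.
    by rewrite (_ : l.-1 = 0%N) ?nu_thr0 ?ltNyr //; lia.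
  have l1L : (0 < l.-1 < L)%N by lia.
  move: lo; rewrite nu_thrE // psi_threshold ?prednK; try lia.
  by rewrite -(fineK (tau_fin l1L)) !lte_fin ltr_psi.
have [-> | lL'] := eqVneq l L; first by rewrite nu_thrL leey.
have l0L : (0 < l < L)%N by lia.
by move: hi; rewrite nu_thrE // -(fineK (tau_fin l0L)) !lee_fin ler_psi.
Qed.

Lemma slab_disjoint l m : (1 <= l <= L)%N -> (1 <= m <= L)%N -> l <> m ->
  slab l `&` slab m = set0.
Proof.
wlog lm : l m / (l < m)%N.
  move=> wlog_lm lL mL lm; have /orP[l_lt_m | m_lt_l] : (l < m)%N || (m < l)%N by lia.
    exact: wlog_lm.
  by rewrite setIC; apply: wlog_lm => // /esym.
move=> lL mL _; rewrite -subset0 => y [[_ y_le] [y_gt _]].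
have nu_lm : (nu l <= nu m.-1)%E by apply: nu_thr_le; lia.
by have := lt_le_trans y_gt (le_trans y_le nu_lm); rewrite ltxx.
Qed.

Lemma inverse_threshold_formula (g : 'cV[R]_p -> 'cV[R]_p) :
  (forall x, exists l, (1 <= l <= L)%N /\ X l x) -> cancel g f ->
  forall y, g y = \sum_(1 <= l < L.+1) \1_(slab l) y *: (invmx (Phi l) *m (y - phi l)).
Proof.
move=> cover gK y; have [l [lL Xl]] := cover (g y).
have y_slab : slab l y by rewrite -[y]gK; exact: f_slab.
rewrite (sum_indic_pick _ slab_disjoint lL y_slab).
by rewrite {1}(piece_inverse f_piece lL (Phi_unit lL) Xl) gK.
Qed.
End threshold_pieces.

Theorem lemmaE2 (R : realType) (p L : nat)
    (X : nat -> set 'cV[R]_p) (phi : nat -> 'cV[R]_p) (Phi : nat -> 'M[R]_p)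
    (f : 'cV[R]_p -> 'cV[R]_p) :
  continuous f ->
  is_partition L X ->
  (forall l, (1 <= l <= L)%N -> convex_set (X l : set (convex_lmodType 'cV[R]_p))) ->
  (forall x, f x = \sum_(1 <= l < L.+1) \1_(X l) x *: (phi l + Phi l *m x)) ->
  (* (1) *)
  (forall x' x'', exists M, in_conv_hull L Phi M /\ f x'' - f x' = M *m (x'' - x'))
  /\
  (* (2) *)
  (forall g : 'cV[R]_p -> 'cV[R]_p, cancel f g -> cancel g f ->
     is_partition L (fun l => f @` X l) /\
     ((forall l, (1 <= l <= L)%N -> Phi l \in unitmx) ->
      forall y, g y = \sum_(1 <= l < L.+1)
                       \1_(f @` X l) y *: (invmx (Phi l) *m (y - phi l))))
  /\
  (* (3) *)
  (forall (a : 'cV[R]_p) (tau : nat -> \bar R),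
     a != 0 ->
     tau 0%N = -oo%E -> tau L = +oo%E ->
     (forall l, (0 < l < L)%N -> tau l \is a fin_num) ->
     (forall l, (l < L)%N -> (tau l < tau l.+1)%E) ->
     (forall l, (1 <= l <= L)%N ->
        X l = [set x | (tau l.-1 < (dotv a x)%:E)%E /\ ((dotv a x)%:E <= tau l)%E]) ->
     forall g : 'cV[R]_p -> 'cV[R]_p, cancel f g -> cancel g f ->
     forall y, g y = \sum_(1 <= l < L.+1)
        \1_([set z | (nu_thr L a phi Phi tau l.-1 < (dotv a (invmx (Phi 1%N) *m z))%:E)%E
                   /\ ((dotv a (invmx (Phi 1%N) *m z))%:E <= nu_thr L a phi Phi tau l)%E]) y
        *: (invmx (Phi l) *m (y - phi l))).
Proof.
(* Neither the convexity of the pieces nor the values of tau 0 and tau L are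
   needed: nu_thr fixes nu_0 = -oo and nu_L = +oo by itself. *)
move=> f_cont X_part _ f_def; have [cover X_disj] := X_part.
have f_piece l x : (1 <= l <= L)%N -> X l x -> f x = phi l + Phi l *m x.
  by move=> lL Xlx; rewrite f_def (sum_indic_pick _ X_disj lL Xlx).
have L_gt0 : (0 < L)%N by have [l [lL _]] := cover 0; lia.
split; [|split].
- exact: increment_in_conv_hull f_cont f_piece cover.
- move=> g fK gK; split; first exact: is_partition_image fK gK X_part.
  exact: inverse_piecewise f_piece g X_part fK gK.
- move=> a tau a_neq0 _ _ tau_fin tau_incr X_slab g fK gK.
  exact (inverse_threshold_formula f_cont f_piece (can_inj fK) a_neq0 L_gt0 tau_fin
    tau_incr X_slab cover gK).
Qed.
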